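(* Let $Q$ be a finite set, let $M\subseteq Q^5$ be an MDS code with code distance $4$, and let $M'\subseteq Q^4$ be a projection of $M$ in some direction $i\in\{1,\dots,5\}$. Then there exists an MDS code $C\subseteq Q^4$ with code distance $2$ such that $M'\subseteq C$.
   Context: A subset $C\subseteq Q^d$ is an MDS code with code distance $\varrho$ if $|C\cap\Gamma|=1$ for every $(\varrho-1)$-dimensional axis-aligned plane $\Gamma\subseteq Q^d$ (the set obtained by fixing some $d-\varrho+1$ coordinates and letting the other $\varrho-1$ range over $Q$). The projection of $C\subseteq Q^d$ in the $i$th direction is $C_i=\{(x_1,\dots,x_{i-1},x_{i+1},\dots,x_d)\mid \exists x_i: (x_1,\dots,x_d)\in C\}\subseteq Q^{d-1}$. *)

From mathcomp Require Import all_boot.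
Set Implicit Arguments. Unset Strict Implicit. Unset Printing Implicit Defensive.

Definition word (Q : finType) (d : nat) := {ffun 'I_d -> Q}.

Definition plane (Q : finType) (d : nat) (S : {set 'I_d}) (v : word Q d)
  : {set word Q d} := [set x : word Q d | [forall j in S, x j == v j]].

Definition is_MDS (Q : finType) (d rho : nat) (C : {set word Q d}) : Prop :=
  forall (S : {set 'I_d}) (v : word Q d),
    #|S| = d - rho + 1 -> #|C :&: plane S v| = 1.

Definition proj (Q : finType) (d : nat) (i : 'I_d.+1) (C : {set word Q d.+1})
  : {set word Q d} :=
  [set x : word Q d | [exists y in C, x == [ffun j => y (lift i j)]]].

From mathcomp Require Import all_boot zify.
Set Implicit Arguments. Unset Strict Implicit. Unset Printing Implicit Defensive.

(* Since M has distance 4, any two coordinates determine a codeword, so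
   reading off a third coordinate of the codeword with two prescribed
   coordinates is a binary quasigroup operation.  Let c0, c1, c2, c3 be the
   coordinates other than i, let x0 * x1 be the i-coordinate of the codeword
   with c0, c1-coordinates x0, x1, and x2 *' t the c3-coordinate of the
   codeword with c2, i-coordinates x2, t.  Every codeword y then satisfies
   y c3 = y c2 *' (y c0 * y c1), and this composition of quasigroups is
   injective in each of its three arguments.  So the projection lies in the
   graph of a ternary quasigroup, which meets every line of Q^4 exactly once,
   i.e. is an MDS code of distance 2. *)

Definition set_coord (Q : finType) (n : nat) (y : word Q n) (k : 'I_n) (q : Q)
  : word Q n := [ffun j => if j == k then q else y j].

Lemma set_coord_inj (Q : finType) (n : nat) (y : word Q n) (k : 'I_n) :
  injective (set_coord y k).
Proof. by move=> q q' /ffunP/(_ k); rewrite !ffunE eqxx. Qed.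

Lemma is_MDS2_lines (Q : finType) (n : nat) (C : {set word Q n.+2}) :
  (forall (k : 'I_n.+2) (y : word Q n.+2),
     #|[set q | set_coord y k q \in C]| = 1) ->
  is_MDS 2 C.
Proof.
move=> lineC S v cardS.
have [k Sk] : exists k, ~: S = [set k].
  by apply/cards1P; move: (cardsC S); rewrite cardS card_ord; lia.
have inS j : (j \in S) = (j != k) by rewrite -in_setC1 -Sk setCK.
rewrite -(lineC k v) -(card_imset _ (@set_coord_inj _ _ v k)).
apply: eq_card => x; rewrite !inE; apply/andP/imsetP.
- case=> xC /forallP plane_x.
  have xE : x = set_coord v k (x k).
    apply/ffunP=> j; rewrite ffunE; case: eqP => [-> //|/eqP jk].
    by move: (plane_x j); rewrite inS jk => /eqP.
  by exists (x k); rewrite // inE -xE.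
- case=> q; rewrite inE => qC ->; split=> //.
  by apply/forallP=> j; rewrite inS ffunE; case: eqP => //=.
Qed.

Lemma card_fiber_inj (T : finType) (f : T -> T) (t : T) :
  injective f -> #|[set x | f x == t]| = 1.
Proof.
move=> injf; rewrite -(cards1 t) -(card_preimset [set t] injf).
by apply: eq_card => x; rewrite !inE.
Qed.

Definition o0 : 'I_4 := @Ordinal 4 0 isT.
Definition o1 : 'I_4 := @Ordinal 4 1 isT.
Definition o2 : 'I_4 := @Ordinal 4 2 isT.
Definition o3 : 'I_4 := @Ordinal 4 3 isT.

Section TernaryQuasigroupGraph.
Variables (Q : finType) (g : Q -> Q -> Q -> Q).
Hypotheses (g_inj1 : forall x1 x2, injective (g ^~ x1 ^~ x2))
           (g_inj2 : forall x0 x2, injective (g x0 ^~ x2))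
           (g_inj3 : forall x0 x1, injective (g x0 x1)).

Definition graph3 : {set word Q 4} :=
  [set x : word Q 4 | x o3 == g (x o0) (x o1) (x o2)].

Lemma graph3_MDS : is_MDS 2 graph3.
Proof.
apply: is_MDS2_lines => k y.
have [->|->|->|->] : [\/ k = o0, k = o1, k = o2 | k = o3].
  by case: k => [[|[|[|[|//]]]] ?]; [apply: Or41|apply: Or42|apply: Or43|apply: Or44];
     apply: val_inj.
- rewrite -[RHS](card_fiber_inj (y o3) (@g_inj1 (y o1) (y o2))).
  by apply: eq_card => q; rewrite !inE !ffunE /= eq_sym.
- rewrite -[RHS](card_fiber_inj (y o3) (@g_inj2 (y o0) (y o2))).
  by apply: eq_card => q; rewrite !inE !ffunE /= eq_sym.
- rewrite -[RHS](card_fiber_inj (y o3) (@g_inj3 (y o0) (y o1))).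
  by apply: eq_card => q; rewrite !inE !ffunE /= eq_sym.
- rewrite -[RHS](card_fiber_inj (g (y o0) (y o1) (y o2)) (@inj_id Q)).
  by apply: eq_card => q; rewrite !inE !ffunE.
Qed.

End TernaryQuasigroupGraph.

Section TwoCoordinateInformationSets.
Variables (Q : finType) (d : nat) (M : {set word Q d}).
Hypothesis MDS_M : is_MDS d.-1 M.

Lemma MDS_pair_plane (a b : 'I_d) (v : word Q d) :
  a != b -> #|M :&: plane [set a; b] v| = 1.
Proof.
move=> ab; apply: MDS_M; have d_gt0 : 0 < d := leq_ltn_trans (leq0n a) (ltn_ord a).
by rewrite cards2 ab -{1}(prednK d_gt0) subSnn.
Qed.

Lemma MDS_pair_exists (a b : 'I_d) (u w : Q) :
  a != b -> exists2 m, m \in M & m a = u /\ m b = w.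
Proof.
move=> ab; set v : word Q d := [ffun j => if j == a then u else w].
have /eqP/cards1P[m planeM] := MDS_pair_plane v ab.
have : m \in M :&: plane [set a; b] v by rewrite planeM set11.
rewrite !inE => /andP[mM /forallP plane_m]; exists m => //.
move: (plane_m a) (plane_m b); rewrite !inE !eqxx orbT /= !ffunE eqxx [b == a]eq_sym (negbTE ab).
by move=> /eqP -> /eqP ->.
Qed.

Lemma MDS_pair_inj (a b : 'I_d) (m m' : word Q d) : a != b ->
  m \in M -> m' \in M -> m a = m' a -> m b = m' b -> m = m'.
Proof.
move=> ab mM m'M ma mb; have /eqP/cards1P[z planeM] := MDS_pair_plane m ab.
suff in_plane x : x \in M -> x a = m a -> x b = m b -> x = z.
  by rewrite (in_plane m) // (in_plane m').
move=> xM xa xb; apply/set1P; rewrite -planeM !inE xM.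
by apply/forallP=> j; apply/implyP; rewrite !inE => /orP[]/eqP->; apply/eqP.
Qed.

Definition codeword (a b : 'I_d) (u w : Q) : word Q d :=
  odflt [ffun=> u] [pick m in M | (m a == u) && (m b == w)].

Lemma codewordP (a b : 'I_d) (u w : Q) : a != b ->
  [/\ codeword a b u w \in M, codeword a b u w a = u & codeword a b u w b = w].
Proof.
move=> ab; rewrite /codeword; case: pickP => [m /andP[mM /andP[/eqP-> /eqP->]] //|none].
have [m mM [ma mb]] := MDS_pair_exists u w ab.
by move: (none m); rewrite mM ma mb !eqxx.
Qed.

Lemma codeword_coord (a b : 'I_d) (y : word Q d) :
  a != b -> y \in M -> codeword a b (y a) (y b) = y.
Proof.
by move=> ab yM; have [mM ma mb] := codewordP (y a) (y b) ab; exact: MDS_pair_inj ab mM yM ma mb.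
Qed.

Lemma codewordC (a b : 'I_d) (u w : Q) :
  a != b -> codeword a b u w = codeword b a w u.
Proof.
move=> ab; have ba : b != a by rewrite eq_sym.
have [mM ma mb] := codewordP u w ab; have [m'M m'b m'a] := codewordP w u ba.
by apply: MDS_pair_inj ab mM m'M _ _; rewrite ?ma ?m'a ?mb ?m'b.
Qed.

Definition code_op (a b e : 'I_d) (u w : Q) : Q := codeword a b u w e.

Lemma code_op_coord (a b e : 'I_d) (y : word Q d) :
  a != b -> y \in M -> code_op a b e (y a) (y b) = y e.
Proof. by move=> ab yM; rewrite /code_op codeword_coord. Qed.

Lemma code_op_injl (a b e : 'I_d) (w : Q) :
  a != b -> e != b -> injective (code_op a b e ^~ w).
Proof.
move=> ab eb u u' same_e.
have [mM ma mb] := codewordP u w ab; have [m'M m'a m'b] := codewordP u' w ab.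
by rewrite -ma -m'a (MDS_pair_inj eb mM m'M same_e) // mb m'b.
Qed.

Lemma code_op_injr (a b e : 'I_d) (u : Q) :
  a != b -> e != a -> injective (code_op a b e u).
Proof.
move=> ab ea w w'; have ba : b != a by rewrite eq_sym.
by rewrite /code_op !(codewordC u _ ab); exact: (code_op_injl ba ea).
Qed.

End TwoCoordinateInformationSets.

Theorem proposition4 (Q : finType) (M : {set word Q 5}) (i : 'I_5) :
  is_MDS 4 M ->
  exists C : {set word Q 4}, is_MDS 2 C /\ proj i M \subset C.
Proof.
move=> MDS_M; pose c := lift i.
have c_neq a b : a != b -> c a != c b by rewrite (inj_eq lift_inj).
have i_neq_c a : i != c a := neq_lift i a.
have c_neq_i a : c a != i by rewrite eq_sym.
pose mul := code_op M (c o0) (c o1) i.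
pose mul' := code_op M (c o2) i (c o3).
have mul_injl x1 : injective (mul ^~ x1) := code_op_injl MDS_M (c_neq o0 o1 isT) (i_neq_c o1).
have mul_injr x0 : injective (mul x0) := code_op_injr MDS_M (c_neq o0 o1 isT) (i_neq_c o0).
have mul'_injl t : injective (mul' ^~ t) := code_op_injl MDS_M (c_neq_i o2) (c_neq_i o3).
have mul'_injr x2 : injective (mul' x2) := code_op_injr MDS_M (c_neq_i o2) (c_neq o3 o2 isT).
exists (graph3 (fun x0 x1 x2 => mul' x2 (mul x0 x1))); split.
  apply: graph3_MDS => x x'; last exact: mul'_injl.
    exact: inj_comp (mul'_injr x') (mul_injl x).
  exact: inj_comp (mul'_injr x') (mul_injr x).
apply/subsetP=> x; rewrite !inE => /existsP[y /andP[yM /eqP->]].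
by rewrite !ffunE /mul /mul' !(code_op_coord MDS_M) ?c_neq ?c_neq_i.
Qed.
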